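(* For every $N\ge1$ and every $f\in H_N^{\mathrm{sip}}$ one has $\mathcal E_N(f)\ge\mathcal R_N(f)$, where $\mathcal E_N$ and $\mathcal R_N$ are the Dirichlet forms described in the context.
   Context: Fix $\gamma>0$ and $p:\mathbb R\to[0,\infty)$ symmetric, finite range $R$, $p(0)=0$. $p_N(r)=p(Nr)$, $A_N=\frac1N\{-R,\dots,R\}\setminus\{0\}$, $A_N^+=\{|r|:r\in A_N\}$. $\mu_N$ gives mass $\frac1N$ to each point of $\frac1N\mathbb Z$, $\nu_{\gamma,N}=\mu_N+\sqrt2\gamma\delta_0$, $H_N^{\mathrm{sip}}=L^2(\frac1N\mathbb Z,\nu_{\gamma,N})$. $\mathcal E_N(f)=-\sum_{w\in\frac1N\mathbb Z}f(w)\sum_{r\in A_N}2p_N(r)\big(\frac{N^2}2+\frac{N^3\gamma}{\sqrt2}\mathbf 1_{\{r=-w\}}\big)(f(w+r)-f(w))\,\nu_{\gamma,N}(w)$ (the Dirichlet form of the rescaled SIP difference process). $\mathcal R_N(f)=-\sum_{v\in\frac1N\mathbb Z}f(v)\,\Delta_Nf(v)\,\mu_N(v)$ with $\Delta_Ng(v)=N^2\sum_{r\in A_N^+}p_N(r)[g(v+r)-2g(v)+g(v-r)]$ (the Dirichlet form of the diffusively rescaled random walk). *)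

From Stdlib Require Import Reals List ZArith Lra.
From Coquelicot Require Import Coquelicot.
Open Scope R_scope.

Definition zsum (u : Z -> R) : R :=
  Series (fun n : nat => u (Z.of_nat n)) + Series (fun n : nat => u (- Z.of_nat n - 1)%Z).

Definition ex_zsum (u : Z -> R) : Prop :=
  ex_series (fun n : nat => u (Z.of_nat n)) /\ ex_series (fun n : nat => u (- Z.of_nat n - 1)%Z).

Definition lsum (l : list Z) (F : Z -> R) : R := fold_right (fun j acc => F j + acc) 0 l.

(* integer labels j of A_N = (1/N){-Rng,...,Rng} \ {0} (r = j/N) *)
Definition A_int (Rng : nat) : list Z :=
  filter (fun j => negb (Z.eqb j 0))
    (map (fun i => (Z.of_nat i - Z.of_nat Rng)%Z) (seq 0 (2 * Rng + 1))).

(* integer labels j of A_N^+ = {|r| : r in A_N} = {1/N, ..., Rng/N} *)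
Definition Aplus_int (Rng : nat) : list Z := map (fun i => Z.of_nat (S i)) (seq 0 Rng).

Definition pt (N : nat) (k : Z) : R := IZR k / INR N.

Definition nu (gamma : R) (N : nat) (w : R) : R :=
  / INR N + (if Req_EM_T w 0 then sqrt 2 * gamma else 0).

(* f in H_N^sip = L^2((1/N)Z, nu_{gamma,N}) *)
Definition in_H_sip (gamma : R) (N : nat) (f : R -> R) : Prop :=
  ex_zsum (fun k => (f (pt N k)) ^ 2 * nu gamma N (pt N k)).

Definition pN (p : R -> R) (N : nat) (r : R) : R := p (INR N * r).

Definition E_N (p : R -> R) (Rng : nat) (gamma : R) (N : nat) (f : R -> R) : R :=
  - zsum (fun k =>
      let w := pt N k in
      f w * lsum (A_int Rng) (fun j =>
        let r := pt N j in
        2 * pN p N r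
          * (INR N ^ 2 / 2 + (if Req_EM_T r (- w) then INR N ^ 3 * gamma / sqrt 2 else 0))
          * (f (w + r) - f w))
      * nu gamma N w).

Definition Delta_N (p : R -> R) (Rng : nat) (N : nat) (g : R -> R) (v : R) : R :=
  INR N ^ 2 * lsum (Aplus_int Rng) (fun j =>
    let r := pt N j in pN p N r * (g (v + r) - 2 * g v + g (v - r))).

Definition R_N (p : R -> R) (Rng : nat) (N : nat) (f : R -> R) : R :=
  - zsum (fun k => let v := pt N k in f v * Delta_N p Rng N f v * (/ INR N)).

From Stdlib Require Import Reals List ZArith Lra Lia Permutation.
From Coquelicot Require Import Coquelicot.
Open Scope R_scope.

(* Split nu_{gamma,N} = mu_N + sqrt2 gamma delta_0.  The mu_N-part of E_N, with
   rate N^2/2 in every direction, is R_N once A_N is folded onto A_N^+.  What is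
   left comes from the origin: the atom sqrt2 gamma at 0 and the extra rate
   N^3 gamma / sqrt2 of jumping into 0.  These terms live on finitely many sites,
   and after the reflection r -> -r (p is symmetric) they add up to
   -sqrt2 gamma N^2 sum_{r in A_N} p_N(r) (f(r) - f(0))^2, so that
   E_N(f) = R_N(f) + sqrt2 gamma N^2 sum_{r in A_N} p_N(r) (f(r) - f(0))^2.
   Square summability of f, which is what f in H_N^sip provides, justifies
   splitting the series. *)

Lemma is_series_zero : is_series (fun _ : nat => 0) 0.
Proof.
  apply filterlim_ext with (fun _ => 0).
  - intros n; rewrite sum_n_const; change (zero : R) with 0; ring.
  - apply filterlim_const.
Qed.

Lemma is_series_delta (n0 : nat) (c : R) :
  is_series (fun n => if Nat.eq_dec n n0 then c else 0) c.
Proof.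
  revert c; induction n0 as [|n0 IH]; intros c; apply is_series_decr_1.
  - match goal with |- is_series _ ?l => replace l with 0 end.
    2: destruct (Nat.eq_dec 0 0); [cbn; ring | lia].
    eapply is_series_ext; [|exact is_series_zero].
    intros n; cbv beta; destruct (Nat.eq_dec (S n) 0); [lia | reflexivity].
  - match goal with |- is_series _ ?l => replace l with c end.
    2: destruct (Nat.eq_dec 0 (S n0)); [lia | cbn; ring].
    eapply is_series_ext; [|exact (IH c)].
    intros n; cbv beta; destruct (Nat.eq_dec n n0), (Nat.eq_dec (S n) (S n0)); lia || reflexivity.
Qed.

Lemma zsum_of_is_series (u : Z -> R) (l1 l2 : R) :
  is_series (fun n : nat => u (Z.of_nat n)) l1 ->
  is_series (fun n : nat => u (- Z.of_nat n - 1)%Z) l2 ->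
  ex_zsum u /\ zsum u = l1 + l2.
Proof.
  intros H1 H2; split.
  - split; [exists l1 | exists l2]; assumption.
  - unfold zsum; rewrite (is_series_unique _ _ H1), (is_series_unique _ _ H2); reflexivity.
Qed.

Lemma zsum_delta_const (m : Z) (c : R) :
  ex_zsum (fun k => if Z.eq_dec k m then c else 0)
  /\ zsum (fun k => if Z.eq_dec k m then c else 0) = c.
Proof.
  set (d := fun k => if Z.eq_dec k m then c else 0).
  destruct (Z_le_gt_dec 0 m).
  - enough (H : ex_zsum d /\ zsum d = c + 0) by now rewrite Rplus_0_r in H.
    apply zsum_of_is_series.
    + eapply is_series_ext; [|exact (is_series_delta (Z.to_nat m) c)].
      intros n; unfold d.
      destruct (Nat.eq_dec n (Z.to_nat m)), (Z.eq_dec (Z.of_nat n) m); lia || reflexivity.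
    + eapply is_series_ext; [|exact is_series_zero].
      intros n; unfold d; destruct (Z.eq_dec (- Z.of_nat n - 1) m); lia || reflexivity.
  - enough (H : ex_zsum d /\ zsum d = 0 + c) by now rewrite Rplus_0_l in H.
    apply zsum_of_is_series.
    + eapply is_series_ext; [|exact is_series_zero].
      intros n; unfold d; destruct (Z.eq_dec (Z.of_nat n) m); lia || reflexivity.
    + eapply is_series_ext; [|exact (is_series_delta (Z.to_nat (- m - 1)) c)].
      intros n; unfold d.
      destruct (Nat.eq_dec n (Z.to_nat (- m - 1))), (Z.eq_dec (- Z.of_nat n - 1) m);
        lia || reflexivity.
Qed.

Lemma ex_zsum_ext (u v : Z -> R) : (forall k, u k = v k) -> ex_zsum u -> ex_zsum v.
Proof.
  intros H [H1 H2]; split;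
    [eapply ex_series_ext; [|exact H1] | eapply ex_series_ext; [|exact H2]]; intros n; apply H.
Qed.

Lemma zsum_ext (u v : Z -> R) : (forall k, u k = v k) -> zsum u = zsum v.
Proof. intros H; unfold zsum; f_equal; apply Series_ext; auto. Qed.

Lemma ex_zsum_zero : ex_zsum (fun _ => 0).
Proof. exact (proj1 (zsum_of_is_series _ _ _ is_series_zero is_series_zero)). Qed.

Lemma zsum_zero : zsum (fun _ => 0) = 0.
Proof.
  rewrite (proj2 (zsum_of_is_series _ _ _ is_series_zero is_series_zero)); ring.
Qed.

Lemma ex_zsum_plus (u v : Z -> R) :
  ex_zsum u -> ex_zsum v -> ex_zsum (fun k => u k + v k).
Proof.
  intros [H1 H2] [H3 H4]; split;
    [exact (ex_series_plus _ _ H1 H3) | exact (ex_series_plus _ _ H2 H4)].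
Qed.

Lemma zsum_plus (u v : Z -> R) :
  ex_zsum u -> ex_zsum v -> zsum (fun k => u k + v k) = zsum u + zsum v.
Proof.
  intros [H1 H2] [H3 H4]; unfold zsum.
  rewrite (Series_plus _ _ H1 H3), (Series_plus _ _ H2 H4); ring.
Qed.

Lemma ex_zsum_scal (c : R) (u : Z -> R) : ex_zsum u -> ex_zsum (fun k => c * u k).
Proof.
  intros [H1 H2]; split; [exact (ex_series_scal_l c _ H1) | exact (ex_series_scal_l c _ H2)].
Qed.

Lemma zsum_scal (c : R) (u : Z -> R) : zsum (fun k => c * u k) = c * zsum u.
Proof. unfold zsum; rewrite !Series_scal_l; ring. Qed.

Lemma ex_zsum_le (u v : Z -> R) :
  (forall k, Rabs (u k) <= v k) -> ex_zsum v -> ex_zsum u.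
Proof.
  intros H [H1 H2]; split;
    [exact (ex_series_le (fun n => u (Z.of_nat n)) _ (fun n => H _) H1)
    | exact (ex_series_le (fun n => u (- Z.of_nat n - 1)%Z) _ (fun n => H _) H2)].
Qed.

Lemma ex_zsum_succ (u : Z -> R) : ex_zsum u -> ex_zsum (fun k => u (k + 1)%Z).
Proof.
  intros [H1 H2]; split.
  - apply ex_series_incr_1 in H1; eapply ex_series_ext; [|exact H1].
    intros n; cbv beta; f_equal; lia.
  - apply (proj2 (ex_series_incr_1 _)); eapply ex_series_ext; [|exact H2].
    intros n; cbv beta; f_equal; lia.
Qed.

Lemma ex_zsum_pred (u : Z -> R) : ex_zsum u -> ex_zsum (fun k => u (k - 1)%Z).
Proof.
  intros [H1 H2]; split.
  - apply (proj2 (ex_series_incr_1 _)); eapply ex_series_ext; [|exact H1].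
    intros n; cbv beta; f_equal; lia.
  - apply ex_series_incr_1 in H2; eapply ex_series_ext; [|exact H2].
    intros n; cbv beta; f_equal; lia.
Qed.

Lemma ex_zsum_shift (u : Z -> R) (j : Z) : ex_zsum u -> ex_zsum (fun k => u (k + j)%Z).
Proof.
  intros H; destruct (Z_le_gt_dec 0 j).
  - replace j with (Z.of_nat (Z.to_nat j)) by lia.
    induction (Z.to_nat j) as [|n IH].
    + eapply ex_zsum_ext; [|exact H]; intros k; cbv beta; f_equal; lia.
    + eapply ex_zsum_ext; [|exact (ex_zsum_succ _ IH)]; intros k; cbv beta; f_equal; lia.
  - replace j with (- Z.of_nat (Z.to_nat (- j)))%Z by lia.
    induction (Z.to_nat (- j)) as [|n IH].
    + eapply ex_zsum_ext; [|exact H]; intros k; cbv beta; f_equal; lia.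
    + eapply ex_zsum_ext; [|exact (ex_zsum_pred _ IH)]; intros k; cbv beta; f_equal; lia.
Qed.

Lemma ex_zsum_delta (m : Z) (u : Z -> R) :
  ex_zsum (fun k => if Z.eq_dec k m then u k else 0).
Proof.
  eapply ex_zsum_ext; [|exact (proj1 (zsum_delta_const m (u m)))].
  intros k; cbv beta; destruct (Z.eq_dec k m); subst; reflexivity.
Qed.

Lemma zsum_delta (m : Z) (u : Z -> R) :
  zsum (fun k => if Z.eq_dec k m then u k else 0) = u m.
Proof.
  rewrite <- (proj2 (zsum_delta_const m (u m))); apply zsum_ext.
  intros k; cbv beta; destruct (Z.eq_dec k m); subst; reflexivity.
Qed.

Lemma ex_zsum_lsum (l : list Z) (u : Z -> Z -> R) :
  (forall j, In j l -> ex_zsum (u j)) -> ex_zsum (fun k => lsum l (fun j => u j k)).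
Proof.
  induction l as [|j l IH]; intros Hl; simpl.
  - apply ex_zsum_zero.
  - apply ex_zsum_plus; [apply Hl; simpl; auto | apply IH; intros; apply Hl; simpl; auto].
Qed.

Lemma zsum_lsum (l : list Z) (u : Z -> Z -> R) :
  (forall j, In j l -> ex_zsum (u j)) ->
  zsum (fun k => lsum l (fun j => u j k)) = lsum l (fun j => zsum (u j)).
Proof.
  induction l as [|j l IH]; intros Hl; simpl.
  - apply zsum_zero.
  - rewrite zsum_plus, IH; auto.
    + intros; apply Hl; simpl; auto.
    + apply Hl; simpl; auto.
    + apply ex_zsum_lsum; intros; apply Hl; simpl; auto.
Qed.

Lemma lsum_plus (l : list Z) (a b : Z -> R) :
  lsum l (fun j => a j + b j) = lsum l a + lsum l b.
Proof. induction l as [|j l IH]; simpl; [ring | rewrite IH; ring]. Qed.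

Lemma lsum_scal (l : list Z) (c : R) (a : Z -> R) :
  lsum l (fun j => c * a j) = c * lsum l a.
Proof. induction l as [|j l IH]; simpl; [ring | rewrite IH; ring]. Qed.

Lemma lsum_ext_in (l : list Z) (a b : Z -> R) :
  (forall j, In j l -> a j = b j) -> lsum l a = lsum l b.
Proof.
  induction l as [|j l IH]; intros H; simpl; auto.
  rewrite H, IH; simpl; auto; intros; apply H; simpl; auto.
Qed.

Lemma lsum_eq0 (l : list Z) (a : Z -> R) : (forall j, a j = 0) -> lsum l a = 0.
Proof. induction l as [|j l IH]; intros H; simpl; [reflexivity | rewrite H, IH; auto; ring]. Qed.

Lemma lsum_app (l1 l2 : list Z) (a : Z -> R) : lsum (l1 ++ l2) a = lsum l1 a + lsum l2 a.
Proof. induction l1 as [|j l IH]; simpl; [ring | rewrite IH; ring]. Qed.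

Lemma lsum_map (l : list Z) (g : Z -> Z) (a : Z -> R) :
  lsum (map g l) a = lsum l (fun j => a (g j)).
Proof. induction l as [|j l IH]; simpl; [reflexivity | rewrite IH; reflexivity]. Qed.

Lemma lsum_perm (l1 l2 : list Z) (a : Z -> R) : Permutation l1 l2 -> lsum l1 a = lsum l2 a.
Proof. induction 1; simpl; try ring; congruence. Qed.

Lemma lsum_nonneg (l : list Z) (a : Z -> R) : (forall j, In j l -> 0 <= a j) -> 0 <= lsum l a.
Proof.
  induction l as [|j l IH]; intros H; simpl; [lra|].
  apply Rplus_le_le_0_compat; [apply H; simpl; auto | apply IH; intros; apply H; simpl; auto].
Qed.

Lemma In_A_int (Rng : nat) (j : Z) :
  In j (A_int Rng) <-> (- Z.of_nat Rng <= j <= Z.of_nat Rng)%Z /\ j <> 0%Z.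
Proof.
  unfold A_int; rewrite filter_In, in_map_iff, Bool.negb_true_iff, Z.eqb_neq.
  split.
  - intros [[i [Hi Hin]] Hz]; apply in_seq in Hin; lia.
  - intros [H1 H2]; split; [|exact H2].
    exists (Z.to_nat (j + Z.of_nat Rng)); split; [lia | apply in_seq; lia].
Qed.

Lemma In_Aplus_int (Rng : nat) (j : Z) : In j (Aplus_int Rng) <-> (1 <= j <= Z.of_nat Rng)%Z.
Proof.
  unfold Aplus_int; rewrite in_map_iff; split.
  - intros [i [Hi Hin]]; apply in_seq in Hin; lia.
  - intros H; exists (Z.to_nat (j - 1)); split; [lia | apply in_seq; lia].
Qed.

Lemma NoDup_Aplus_int (Rng : nat) : NoDup (Aplus_int Rng).
Proof.
  apply FinFun.Injective_map_NoDup; [intros x y H; lia | apply seq_NoDup].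
Qed.

Lemma A_int_perm (Rng : nat) :
  Permutation (A_int Rng) (Aplus_int Rng ++ map Z.opp (Aplus_int Rng)).
Proof.
  apply NoDup_Permutation.
  - apply NoDup_filter, FinFun.Injective_map_NoDup; [intros x y H; lia | apply seq_NoDup].
  - apply NoDup_app.
    + apply NoDup_Aplus_int.
    + apply FinFun.Injective_map_NoDup; [intros x y H; lia | apply NoDup_Aplus_int].
    + intros a Ha Hb; apply In_Aplus_int in Ha.
      apply in_map_iff in Hb; destruct Hb as [b [<- Hb]]; apply In_Aplus_int in Hb; lia.
  - intros x; rewrite In_A_int, in_app_iff, in_map_iff, In_Aplus_int; split.
    + intros H; destruct (Z_le_gt_dec x 0); [right | left; lia].
      exists (- x)%Z; rewrite In_Aplus_int; lia.
    + intros [H | [y [<- Hy]]]; [lia | apply In_Aplus_int in Hy; lia].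
Qed.

Lemma lsum_A_int_split (Rng : nat) (a : Z -> R) :
  lsum (A_int Rng) a = lsum (Aplus_int Rng) (fun j => a j + a (- j)%Z).
Proof. rewrite (lsum_perm _ _ _ (A_int_perm Rng)), lsum_app, lsum_map, lsum_plus; reflexivity. Qed.

Lemma lsum_A_int_opp (Rng : nat) (a : Z -> R) :
  lsum (A_int Rng) (fun j => a (- j)%Z) = lsum (A_int Rng) a.
Proof.
  rewrite !lsum_A_int_split; apply lsum_ext_in; intros j _.
  rewrite Z.opp_involutive; ring.
Qed.

Lemma pt_add (N : nat) (a b : Z) : pt N (a + b) = pt N a + pt N b.
Proof. unfold pt, Rdiv; rewrite plus_IZR; ring. Qed.

Lemma pt_sub (N : nat) (a b : Z) : pt N (a - b) = pt N a - pt N b.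
Proof. unfold pt, Rdiv; rewrite minus_IZR; ring. Qed.

Lemma pt_opp (N : nat) (a : Z) : pt N (- a) = - pt N a.
Proof. unfold pt, Rdiv; rewrite opp_IZR; ring. Qed.

Section LatticePoints.

Variable N : nat.
Hypothesis hN : (1 <= N)%nat.

Lemma pt_inj (a b : Z) : pt N a = pt N b -> a = b.
Proof.
  pose proof (lt_0_INR N ltac:(lia)); unfold pt; intros E; apply eq_IZR.
  apply (Rmult_eq_reg_r (/ INR N)); [exact E | apply Rinv_neq_0_compat; lra].
Qed.

Lemma Req_EM_T_pt (A : Type) (a b : Z) (x y : A) :
  (if Req_EM_T (pt N a) (pt N b) then x else y) = (if Z.eq_dec a b then x else y).
Proof.
  destruct (Req_EM_T _ _) as [E|E], (Z.eq_dec a b); subst; auto.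
  - apply pt_inj in E; congruence.
  - congruence.
Qed.

Lemma pN_pt (p : R -> R) (j : Z) : pN p N (pt N j) = p (IZR j).
Proof. pose proof (lt_0_INR N ltac:(lia)); unfold pN, pt; f_equal; field; lra. Qed.

Lemma nu_pt (gamma : R) (k : Z) :
  nu gamma N (pt N k) = / INR N + (if Z.eq_dec k 0 then sqrt 2 * gamma else 0).
Proof.
  assert (H0 : pt N 0 = 0) by (unfold pt, Rdiv; ring).
  unfold nu; f_equal; rewrite <- (Req_EM_T_pt R k 0), H0; reflexivity.
Qed.

End LatticePoints.

Definition lattice_gen (Rng : nat) (q F : Z -> R) (k : Z) : R :=
  lsum (A_int Rng) (fun j => q j * (F (k + j)%Z - F k)).

(* The contribution of the atom of nu at 0 (site k = 0) and of the jumps from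
   k = -j into 0, per unit sqrt2 gamma N^2. *)
Definition origin_term (Rng : nat) (q F : Z -> R) (k : Z) : R :=
  (if Z.eq_dec k 0 then F 0%Z * lattice_gen Rng q F 0 else 0)
  + lsum (A_int Rng) (fun j => if Z.eq_dec k (- j) then q j * F k * (F 0%Z - F k) else 0).

Section LatticeGenerator.

Variables (Rng : nat) (q F : Z -> R).
Hypothesis q_sym : forall j, q (- j)%Z = q j.

Lemma lattice_gen_second_difference (k : Z) :
  lattice_gen Rng q F k
  = lsum (Aplus_int Rng) (fun j => q j * (F (k + j)%Z - 2 * F k + F (k - j)%Z)).
Proof.
  unfold lattice_gen; rewrite lsum_A_int_split; apply lsum_ext_in; intros j _.
  rewrite q_sym; replace (k + - j)%Z with (k - j)%Z by lia; ring.
Qed.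

Lemma ex_zsum_origin_term : ex_zsum (origin_term Rng q F).
Proof.
  apply ex_zsum_plus.
  - apply (ex_zsum_delta 0 (fun _ => F 0%Z * lattice_gen Rng q F 0)).
  - apply (ex_zsum_lsum _ (fun j k => if Z.eq_dec k (- j) then q j * F k * (F 0%Z - F k) else 0)).
    intros j _; apply ex_zsum_delta.
Qed.

Lemma zsum_origin_term :
  zsum (origin_term Rng q F) = - lsum (A_int Rng) (fun j => q j * (F j - F 0%Z) ^ 2).
Proof.
  unfold origin_term.
  rewrite zsum_plus;
    [| apply (ex_zsum_delta 0 (fun _ => F 0%Z * lattice_gen Rng q F 0))
     | apply (ex_zsum_lsum _
         (fun j k => if Z.eq_dec k (- j) then q j * F k * (F 0%Z - F k) else 0));
       intros j _; apply ex_zsum_delta].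
  rewrite (zsum_delta 0 (fun _ => F 0%Z * lattice_gen Rng q F 0)),
    (zsum_lsum _ (fun j k => if Z.eq_dec k (- j) then q j * F k * (F 0%Z - F k) else 0))
    by (intros j _; apply ex_zsum_delta).
  rewrite (lsum_ext_in _ _ (fun j => q j * F (- j)%Z * (F 0%Z - F (- j)%Z)))
    by (intros j _; apply zsum_delta).
  assert (Hopp : lsum (A_int Rng) (fun j => q j * F (- j)%Z * (F 0%Z - F (- j)%Z))
                 = lsum (A_int Rng) (fun j => q j * F j * (F 0%Z - F j))).
  { rewrite <- (lsum_A_int_opp Rng (fun j => q j * F j * (F 0%Z - F j))).
    apply lsum_ext_in; intros j _; rewrite q_sym; reflexivity. }
  rewrite Hopp; unfold lattice_gen; rewrite <- lsum_scal, <- lsum_plus.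
  match goal with |- _ = - ?L => replace (- L) with (-1 * L) by ring end.
  rewrite <- lsum_scal.
  apply lsum_ext_in; intros j _; replace (0 + j)%Z with j by lia; ring.
Qed.

Hypothesis F_sq : ex_zsum (fun k => F k ^ 2).

Lemma ex_zsum_mul_shift (j : Z) : ex_zsum (fun k => F k * F (k + j)%Z).
Proof.
  apply ex_zsum_le with (fun k => F k ^ 2 + F (k + j)%Z ^ 2).
  - intros k; apply Rabs_le; split; nra.
  - apply ex_zsum_plus; [exact F_sq | exact (ex_zsum_shift _ j F_sq)].
Qed.

Lemma ex_zsum_mul_lattice_gen : ex_zsum (fun k => F k * lattice_gen Rng q F k).
Proof.
  apply ex_zsum_ext with
    (fun k => lsum (A_int Rng) (fun j => q j * (F k * F (k + j)%Z) + - q j * F k ^ 2)).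
  - intros k; unfold lattice_gen; rewrite <- lsum_scal; apply lsum_ext_in; intros j _; ring.
  - apply (ex_zsum_lsum _ (fun j k => q j * (F k * F (k + j)%Z) + - q j * F k ^ 2)).
    intros j _; apply ex_zsum_plus; apply ex_zsum_scal; [apply ex_zsum_mul_shift | exact F_sq].
Qed.

End LatticeGenerator.

Definition on_lattice (N : nat) (f : R -> R) (k : Z) : R := f (pt N k).

Section SIP.

Variables (gamma : R) (p : R -> R) (Rng N : nat) (f : R -> R).
Hypothesis hN : (1 <= N)%nat.

Local Notation F := (on_lattice N f).
Local Notation q := (fun j : Z => p (IZR j)).

Lemma R_N_lattice (hp_sym : forall x, p (- x) = p x) :
  R_N p Rng N f = - zsum (fun k => INR N * (F k * lattice_gen Rng q F k)).
Proof.
  pose proof (lt_0_INR N ltac:(lia)).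
  unfold R_N; f_equal; apply zsum_ext; intros k; cbv zeta.
  rewrite lattice_gen_second_difference by (intros j; rewrite opp_IZR; apply hp_sym).
  unfold Delta_N, on_lattice.
  rewrite (lsum_ext_in _ _
    (fun j => p (IZR j) * (f (pt N (k + j)) - 2 * f (pt N k) + f (pt N (k - j)))))
    by (intros j _; rewrite pN_pt, pt_add, pt_sub by exact hN; reflexivity).
  field; lra.
Qed.

Lemma sip_rates_on_lattice (k : Z) :
  lsum (A_int Rng) (fun j =>
    2 * pN p N (pt N j)
      * (INR N ^ 2 / 2 + (if Req_EM_T (pt N j) (- pt N k) then INR N ^ 3 * gamma / sqrt 2 else 0))
      * (f (pt N k + pt N j) - f (pt N k)))
  = INR N ^ 2 * lattice_gen Rng q F k
    + lsum (A_int Rng) (fun j =>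
        if Z.eq_dec j (- k) then sqrt 2 * gamma * INR N ^ 3 * (p (IZR j) * (F 0%Z - F k)) else 0).
Proof.
  assert (Hsqrt2 : 0 < sqrt 2) by (apply sqrt_lt_R0; lra).
  assert (Hrate : 2 * (INR N ^ 3 * gamma / sqrt 2) = sqrt 2 * gamma * INR N ^ 3).
  { rewrite <- (sqrt_sqrt 2) at 1 by lra; field; lra. }
  unfold lattice_gen; rewrite <- lsum_scal, <- lsum_plus; apply lsum_ext_in; intros j _.
  rewrite pN_pt, <- pt_opp, Req_EM_T_pt, <- pt_add by exact hN.
  unfold on_lattice; destruct (Z.eq_dec j (- k)) as [->|].
  - replace (k + - k)%Z with 0%Z by lia; rewrite <- Hrate; field; lra.
  - field.
Qed.

Lemma E_N_lattice :
  E_N p Rng gamma N f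
  = - zsum (fun k => INR N * (F k * lattice_gen Rng q F k)
                     + sqrt 2 * gamma * INR N ^ 2 * origin_term Rng q F k).
Proof.
  pose proof (lt_0_INR N ltac:(lia)) as HN.
  unfold E_N; f_equal; apply zsum_ext; intros k; cbv zeta.
  rewrite nu_pt, sip_rates_on_lattice by exact hN.
  change (f (pt N k)) with (F k); unfold origin_term.
  set (G := lattice_gen Rng q F k).
  destruct (Z.eq_dec k 0) as [->|Hk].
  - rewrite !lsum_eq0 by (intros j; destruct (Z.eq_dec _ _); ring).
    fold G; field; lra.
  - set (D := lsum (A_int Rng) (fun j => if Z.eq_dec j (- k) then _ else 0)).
    set (D' := lsum (A_int Rng) (fun j => if Z.eq_dec k (- j) then _ else 0)).
    assert (HD : F k * D = INR N * (sqrt 2 * gamma * INR N ^ 2 * D')).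
    { unfold D, D'; rewrite <- !lsum_scal; apply lsum_ext_in; intros j _.
      destruct (Z.eq_dec j (- k)), (Z.eq_dec k (- j)); try lia; ring. }
    transitivity (INR N * (F k * G) + F k * D / INR N); [field; lra|].
    rewrite HD; field; lra.
Qed.

Lemma ex_zsum_sq_of_in_H_sip :
  in_H_sip gamma N f -> ex_zsum (fun k => F k ^ 2).
Proof.
  intros hf; pose proof (lt_0_INR N ltac:(lia)).
  apply ex_zsum_ext with (fun k => INR N * (f (pt N k) ^ 2 * nu gamma N (pt N k))
    + (if Z.eq_dec k 0 then - (INR N * sqrt 2 * gamma * F 0%Z ^ 2) else 0)).
  - intros k; rewrite nu_pt by exact hN; unfold on_lattice.
    destruct (Z.eq_dec k 0) as [->|]; field; lra.
  - apply ex_zsum_plus; [apply ex_zsum_scal, hf |].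
    apply (ex_zsum_delta 0 (fun _ => - (INR N * sqrt 2 * gamma * F 0%Z ^ 2))).
Qed.

Theorem E_N_eq_R_N_add (hp_sym : forall x, p (- x) = p x) (hf : in_H_sip gamma N f) :
  E_N p Rng gamma N f
  = R_N p Rng N f
    + sqrt 2 * gamma * INR N ^ 2 * lsum (A_int Rng) (fun j => p (IZR j) * (F j - F 0%Z) ^ 2).
Proof.
  assert (q_sym : forall j, q (- j)%Z = q j) by (intros j; rewrite opp_IZR; apply hp_sym).
  pose proof (ex_zsum_sq_of_in_H_sip hf) as F_sq.
  rewrite E_N_lattice, (R_N_lattice hp_sym), zsum_plus, (zsum_scal _ (origin_term Rng q F)),
    (zsum_origin_term _ _ _ q_sym).
  - ring.
  - apply ex_zsum_scal, ex_zsum_mul_lattice_gen, F_sq.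
  - apply ex_zsum_scal, ex_zsum_origin_term.
Qed.

End SIP.

Theorem proposition5p6 (gamma : R) (p : R -> R) (Rng : nat)
  (hgamma : 0 < gamma)
  (hp_nonneg : forall x, 0 <= p x)
  (hp_sym : forall x, p (- x) = p x)
  (hp_range : forall x, INR Rng < Rabs x -> p x = 0)
  (hp0 : p 0 = 0)
  (N : nat) (hN : (1 <= N)%nat) (f : R -> R)
  (hf : in_H_sip gamma N f) :
  E_N p Rng gamma N f >= R_N p Rng N f.
Proof.
  (* hp0 and hp_range are already built into A_N. *)
  rewrite (E_N_eq_R_N_add gamma p Rng N f hN hp_sym hf).
  assert (Hcoef : 0 <= sqrt 2 * gamma * INR N ^ 2)
    by (pose proof (sqrt_pos 2); apply Rmult_le_pos; nra).
  assert (Henergy : 0 <= lsum (A_int Rng)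
                           (fun j => p (IZR j) * (on_lattice N f j - on_lattice N f 0%Z) ^ 2)).
  { apply lsum_nonneg; intros j _; apply Rmult_le_pos; [apply hp_nonneg | apply pow2_ge_0]. }
  nra.
Qed.
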